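(* Let $x_s<x_t$ be integers, let $C\ge 0$, and let $f:[x_s,x_t]\to\mathbb{R}$ be such that $([x_s,x_t],f)$ is an Ameso($C$) pair. If there exist $x'\in[x_s,x_t]$ and $z\in[x_s,x')$ with $f(z)-f(x')\ge C$, then $\min_{y\in[z,x_t]}f(y)=\min_{y\in[x_s,x_t]}f(y)$.
   Context: For integers $a\le b$, $[a,b]$ denotes the set of integers $\{a,\dots,b\}$ and $[a,b)$ the set $\{a,\dots,b-1\}$. Floors and ceilings of vectors are taken componentwise. A set $D^n\subseteq\mathbb{Z}^n$ is an Ameso set if $\lceil(\vec x+\vec y)/2\rceil,\lfloor(\vec x+\vec y)/2\rfloor\in D^n$ for all $\vec x,\vec y\in D^n$. For $C\ge 0$, $(D^n,f)$ is an Ameso($C$) pair if $D^n$ is an Ameso set, $f:D^n\to\mathbb{R}$ is bounded below, and $f(\vec x)+f(\vec y)+C\ge f(\lceil(\vec x+\vec y)/2\rceil)+f(\lfloor(\vec x+\vec y)/2\rfloor)$ for all $\vec x,\vec y\in D^n$. *)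

From Stdlib Require Import ZArith Reals.
Open Scope R_scope.

(* Componentwise floor / ceiling of (x+y)/2 in dimension n = 1.
   Z.div rounds toward -infinity, so [floor_half a = floor(a/2)] and
   [ceil_half a = -floor(-a/2) = ceil(a/2)]. *)
Definition floor_half (a : Z) : Z := Z.div a 2.
Definition ceil_half (a : Z) : Z := Z.opp (Z.div (Z.opp a) 2).

Definition Ameso_set (D : Z -> Prop) : Prop :=
  forall x y : Z, D x -> D y ->
    D (ceil_half (x + y)) /\ D (floor_half (x + y)).

(* Ameso(C) pair (D, f) with f : D -> R (values of f outside D are irrelevant). *)
Definition Ameso_pair (C : R) (D : Z -> Prop) (f : Z -> R) : Prop :=
  Ameso_set D /\
  (exists b : R, forall x : Z, D x -> b <= f x) /\
  (forall x y : Z, D x -> D y ->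
     f x + f y + C >= f (ceil_half (x + y)) + f (floor_half (x + y))).

Definition Zicc (a b : Z) : Z -> Prop := fun x => (a <= x <= b)%Z.

Definition is_min_on (S : Z -> Prop) (f : Z -> R) (m : R) : Prop :=
  (exists y : Z, S y /\ f y = m) /\ (forall y : Z, S y -> m <= f y).

(** Let [k] be the leftmost maximiser of [f] strictly between a point [y < z]
    and [x']; as [z] lies in that range, [f k >= f x' + C >= f x'].  Reflect
    about [k] by the distance to the nearer of [y] and [x'].  If [y] is nearer,
    [2k - y] lies in [(k, x']], where [f <= f k], so the midpoint inequality
    gives [f y >= f k - C >= f x'].  If [x'] is strictly nearer, [2k - x'] lies
    in [(y, k)], where [f < f k], and the midpoint inequality gives
    [f x' + C > f k], a contradiction.  So no point left of [z] undercuts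
    [f x'], and the minimum over [[xs, xt]] is attained in [[z, xt]]. *)

From Stdlib Require Import ZArith Reals Lia Lra.
Open Scope R_scope.

Lemma ceil_half_double (k : Z) : ceil_half (2 * k) = k.
Proof.
  unfold ceil_half.
  replace (- (2 * k))%Z with (- k * 2)%Z by ring.
  rewrite Z.div_mul by lia; ring.
Qed.

Lemma floor_half_double (k : Z) : floor_half (2 * k) = k.
Proof.
  unfold floor_half; rewrite Z.mul_comm; apply Z.div_mul; lia.
Qed.

Lemma Ameso_pair_midpoint (C : R) (D : Z -> Prop) (f : Z -> R) (x y k : Z) :
  Ameso_pair C D f -> D x -> D y -> (x + y = 2 * k)%Z ->
  f x + f y + C >= 2 * f k.
Proof.
  intros [_ [_ Hmid]] Dx Dy Hxy.
  pose proof (Hmid x y Dx Dy) as H.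
  rewrite Hxy, ceil_half_double, floor_half_double in H; lra.
Qed.

Lemma leftmost_argmax (f : Z -> R) (a b : Z) : (a <= b)%Z ->
  exists k, (a <= k <= b)%Z /\
    (forall q, (a <= q <= b)%Z -> f q <= f k) /\
    (forall q, (a <= q < k)%Z -> f q < f k).
Proof.
  revert b; apply Z.le_ind.
  - repeat intro; subst; reflexivity.
  - exists a; split; [lia | split].
    + intros q Hq; replace q with a by lia; lra.
    + intros q Hq; lia.
  - intros b Hab [k [Hk [Hle Hlt]]].
    destruct (Rlt_le_dec (f k) (f (Z.succ b))) as [Hnew | Hold].
    + exists (Z.succ b); split; [lia | split]; intros q Hq.
      * destruct (Z.eq_dec q (Z.succ b)) as [-> | Hne]; [lra|].
        specialize (Hle q ltac:(lia)); lra.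
      * specialize (Hle q ltac:(lia)); lra.
    + exists k; split; [lia | split]; [| exact Hlt].
      intros q Hq; destruct (Z.eq_dec q (Z.succ b)) as [-> | Hne]; [exact Hold|].
      apply Hle; lia.
Qed.

Lemma Ameso_drop_bounds_left (xs xt : Z) (C : R) (f : Z -> R) (y z x' : Z) :
  0 <= C -> Ameso_pair C (Zicc xs xt) f ->
  (xs <= y)%Z -> (y < z < x')%Z -> (x' <= xt)%Z ->
  f z - f x' >= C -> f x' <= f y.
Proof.
  intros HC HA Hy Hyz Hx' Hdrop.
  destruct (leftmost_argmax f (y + 1) (x' - 1)) as [k [Hk [Hle Hlt]]]; [lia|].
  assert (Hpeak : f x' + C <= f k) by (specialize (Hle z ltac:(lia)); lra).
  destruct (Z_le_gt_dec (k - y) (x' - k)) as [Hnear | Hfar].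
  - assert (Hright : f (2 * k - y)%Z <= f k).
    { destruct (Z.eq_dec (2 * k - y) x') as [-> | Hne]; [lra | apply Hle; lia]. }
    pose proof (Ameso_pair_midpoint C _ f y (2 * k - y) k HA
                  ltac:(unfold Zicc; lia) ltac:(unfold Zicc; lia) ltac:(lia)).
    lra.
  - pose proof (Ameso_pair_midpoint C _ f (2 * k - x') x' k HA
                  ltac:(unfold Zicc; lia) ltac:(unfold Zicc; lia) ltac:(lia)).
    specialize (Hlt (2 * k - x')%Z ltac:(lia)); lra.
Qed.

Lemma is_min_on_dominated (S T : Z -> Prop) (f : Z -> R) (m1 m2 : R) :
  (forall y, S y -> T y) ->
  (forall y, T y -> exists y', S y' /\ f y' <= f y) ->
  is_min_on S f m1 -> is_min_on T f m2 -> m1 = m2.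
Proof.
  intros HST Hdom [[y1 [Sy1 <-]] Hmin1] [[y2 [Ty2 <-]] Hmin2].
  apply Rle_antisym.
  - destruct (Hdom y2 Ty2) as [y' [Sy' Hy']].
    specialize (Hmin1 y' Sy'); lra.
  - exact (Hmin2 y1 (HST y1 Sy1)).
Qed.

Theorem corollary3 (xs xt : Z) (C : R) (f : Z -> R) (x' z : Z) (m1 m2 : R) :
  (xs < xt)%Z ->
  0 <= C ->
  Ameso_pair C (Zicc xs xt) f ->
  (xs <= x' <= xt)%Z ->
  (xs <= z < x')%Z ->
  f z - f x' >= C ->
  is_min_on (Zicc z xt) f m1 ->
  is_min_on (Zicc xs xt) f m2 ->
  m1 = m2.
Proof.
  intros _ HC HA Hx' Hz Hdrop.
  apply is_min_on_dominated; unfold Zicc.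
  - lia.
  - intros y Hy.
    destruct (Z_le_gt_dec z y) as [Hzy | Hyz].
    + exists y; split; [lia | lra].
    + exists x'; split; [lia|].
      apply (Ameso_drop_bounds_left xs xt C f y z x'); auto; lia.
Qed.
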